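(* For every $\varepsilon>0$ and every instance of the scheduling problem described in the context satisfying the slack assumption with parameter $\varepsilon$, let $J$ be the set of jobs admitted by the two-threshold algorithm and $F\subseteq J$ the set of admitted jobs that it finishes (completes by their deadlines). Then \[\sum_{j\in F}w_j\ \ge\ \frac12\sum_{j\in J}w_j.\]
   Context: Problem: $m$ unrelated machines; jobs arrive online; job $j$ is revealed at release date $r_j$ with processing times $p_{ij}\in\mathbb{R}_{>0}\cup\{\infty\}$ on machines $i$, weight $w_j>0$, deadline $d_j$. The density of $j$ on $i$ is $\rho_{ij}=w_j/p_{ij}$. Preemption is allowed; the schedule is non-migratory (a job admitted to machine $i$ is processed only there and completes after receiving $p_{ij}$ units of processing). Slack assumption with parameter $\varepsilon>0$: $d_j-r_j\ge(1+\varepsilon)p_{ij}$ whenever $p_{ij}<\infty$. Two-threshold algorithm: let $\varepsilon'=\min\{\varepsilon,1\}$. A job $j$ may be admitted to a machine $i$ at a time $a_j$; it is then never processed on any other machine. Job $j$ admitted to $i$ is active on $i$ at time $\tau\ge a_j$ if its remaining processing requirement on $i$ is positive and at most $a_j+(1+\varepsilon'/2)p_{ij}-\tau$; once a job stops being active without having completed, it is discarded and never processed again. Scheduling routine: at every time $\tau$, each machine $i$ processes the active job on $i$ of highest density $\rho_{ij}$. Admission routine: it is invoked at every time $\tau$ at which a job is released or a job completes. It loops over $i=1,\dots,m$; for machine $i$, let $j^\star$ be a job of maximum density $\rho_{ij^\star}$ among the jobs with $r_{j^\star}\le\tau$ and $d_{j^\star}-\tau\ge(1+\varepsilon'/2)p_{ij^\star}$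 that have not been admitted and not previously been considered. If no job is active on $i$ at $\tau$, $j^\star$ is admitted to $i$ with $a_{j^\star}=\tau$. Otherwise, let $j$ be the active job on $i$ of highest density; $j^\star$ is admitted to $i$ with $a_{j^\star}=\tau$ if one of the following holds: (1) $p_{ij^\star}\le\frac{\varepsilon'}{2}p_{ij}$ and $\rho_{ij^\star}\ge\frac{8}{\varepsilon'}\rho_{ij}$; (2) $\frac{\varepsilon'}{2}p_{ij}<p_{ij^\star}\le p_{ij}$ and $w_{j^\star}\ge 4w_j$; (3) $p_{ij^\star}>p_{ij}$ and $\rho_{ij^\star}\ge 4\rho_{ij}$. A newly admitted job starts processing immediately. A finished job is an admitted job that completes (it does so by time $a_j+(1+\varepsilon'/2)p_{ij}\le d_j$). *)

From HB Require Import structures.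
From mathcomp Require Import all_boot all_order all_algebra.
From mathcomp Require Import boolp reals.
Set Implicit Arguments.
Unset Strict Implicit.
Unset Printing Implicit Defensive.
Import Order.TTheory GRing.Theory Num.Theory.
Local Open Scope ring_scope.

(* Instance: m machines ('I_m), n jobs ('I_n); release dates r, weights w,
   deadlines d, processing times p i j : option R (None = infinity). *)
Section TwoThreshold.
Context (R : realType) (m n : nat).
Context (eps : R) (r w d : 'I_n -> R) (p : 'I_m -> 'I_n -> option R).

Definition valid_instance : Prop :=
  0 < eps /\ (forall j, 0 < w j) /\ (forall i j q, p i j = Some q -> 0 < q).

Definition slack_assumption : Prop :=
  forall i j q, p i j = Some q -> (1 + eps) * q <= d j - r j.

Definition eps' : R := Num.min eps 1.
Definition cst : R := 1 + eps' / 2.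

Definition density (i : 'I_m) (j : 'I_n) : R :=
  match p i j with Some q => w j / q | None => 0 end.

(* An execution of the algorithm (continuous time):
   mach j  = machine j is admitted to (None = never admitted),
   adm j   = admission time a_j,
   rem j t = remaining processing requirement of j (on its machine) at time t,
   sched i t = job processed by machine i at time t (None = idle),
   consid t i = job j* considered for machine i by the admission routine
                invoked at time t. *)
Record run := Run {
  mach : 'I_n -> option 'I_m;
  adm : 'I_n -> R;
  rem : 'I_n -> R -> R;
  sched : 'I_m -> R -> option 'I_n;
  consid : R -> 'I_m -> option 'I_n }.

Variable s : run.

(* j (admitted to i) is active on i at time tau; the clause on all earlier
   times t encodes that a job that stopped being active is discarded. *)
Definition active (i : 'I_m) (j : 'I_n) (tau : R) : Prop :=
  mach s j = Some i /\ adm s j <= tau /\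
  exists q, p i j = Some q /\ 0 < rem s j tau /\
    forall t, adm s j <= t <= tau -> rem s j t <= adm s j + cst * q - t.

(* active and admitted strictly before tau (used by the admission routine
   invoked at tau, before the admissions made at tau) *)
Definition active_before (i : 'I_m) (j : 'I_n) (tau : R) : Prop :=
  active i j tau /\ adm s j < tau.

Definition admitted (j : 'I_n) : bool := mach s j != None.

Definition admitted_before (j : 'I_n) (tau : R) : Prop :=
  admitted j /\ adm s j < tau.

Definition completes (j : 'I_n) (tau : R) : Prop :=
  admitted j /\ adm s j <= tau /\ rem s j tau = 0 /\
  forall t, adm s j <= t < tau -> 0 < rem s j t.

Definition finished (j : 'I_n) : Prop := exists tau, completes j tau.

Definition event (tau : R) : Prop :=
  (exists j, r j = tau) \/ (exists j, completes j tau).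

Definition candidate (tau : R) (i : 'I_m) (j : 'I_n) : Prop :=
  r j <= tau /\ (exists q, p i j = Some q /\ cst * q <= d j - tau) /\
  ~ admitted_before j tau /\
  forall i' : 'I_m, (i' < i)%N -> consid s tau i' <> Some j.

Definition thresholds (i : 'I_m) (js j : 'I_n) : Prop :=
  exists qs q, p i js = Some qs /\ p i j = Some q /\
  [\/ qs <= eps' / 2 * q /\ 8 / eps' * density i j <= density i js,
      eps' / 2 * q < qs <= q /\ 4 * w j <= w js
    | q < qs /\ 4 * density i j <= density i js].

Definition admitted_at (i : 'I_m) (j : 'I_n) (tau : R) : Prop :=
  mach s j = Some i /\ adm s j = tau.

Definition is_two_threshold_run : Prop :=
  (* the schedule is piecewise constant (right-continuous, finitely many
     breakpoints) *)
  (exists bs : seq R, forall (i : 'I_m) (t1 t2 : R), t1 <= t2 ->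
      (forall b, b \in bs -> ~ (t1 < b <= t2)) -> sched s i t1 = sched s i t2)
  /\ (forall j i, mach s j = Some i ->
        (exists q, p i j = Some q /\ rem s j (adm s j) = q) /\
        forall t1 t2, t1 <= t2 ->
          ((forall u, t1 <= u < t2 -> sched s i u = Some j) ->
              rem s j t2 = rem s j t1 - (t2 - t1)) /\
          ((forall u, t1 <= u < t2 -> sched s i u <> Some j) ->
              rem s j t2 = rem s j t1))
  /\ (forall i tau, match sched s i tau with
        | Some j => active i j tau /\
                    forall k, active i k tau -> density i k <= density i j
        | None => forall k, ~ active i k tau end)
  /\ (forall tau, event tau -> forall i : 'I_m,
        (consid s tau i = None <-> forall j, ~ candidate tau i j) /\
        forall js, consid s tau i = Some js ->
          candidate tau i js /\
          (forall k, candidate tau i k -> density i k <= density i js) /\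
          ((forall k, ~ active_before i k tau) -> admitted_at i js tau) /\
          ((exists k, active_before i k tau) ->
             exists j, active_before i j tau /\
               (forall k, active_before i k tau -> density i k <= density i j) /\
               (admitted_at i js tau <-> thresholds i js j)))
  /\ (forall j i, mach s j = Some i ->
        event (adm s j) /\ consid s (adm s j) i = Some j).

End TwoThreshold.

From Pilot Require Import Defs.
From HB Require Import structures.
From mathcomp Require Import all_boot all_order all_algebra.
From mathcomp Require Import boolp classical_sets reals.
From mathcomp Require Import ring lra.
Import Order.TTheory GRing.Theory Num.Theory.

(** A charging argument on a forest of admitted jobs.  A job admitted while
    other jobs are active on its machine is hung below the densest of them; the
    admission thresholds make it at least four times denser than its parent,
    and every job run while [j] is active lies in the subtree of [j].  An
    admitted job [j] that is not finished stays active until it misses its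
    window [[a_j, a_j + (1 + eps'/2) q_j]], so meanwhile its machine spends
    [eps'/2 * q_j] on the proper subtree of [j].  Give finished jobs the gain
    [+w] and unfinished admitted jobs the gain [-w].  By induction up the
    forest, the total gain [G_k] of the subtree of an admitted job [k] satisfies
    [w_k <= G_k] and [rho_k * P_k <= G_k], where [P_k] is the work done on the
    subtree: if [k] is unfinished, either some child is four times heavier
    than [k], or all children are [8/eps'] times denser and the work
    [eps'/2 * q_k] below [k] pays for [2 w_k].  Summing over the roots gives
    [2 w(F) - w(J) >= 0]. *)

Section PiecewiseInduction.
Context {disp : Order.disp_t} {T : porderType disp}.
Local Open Scope order_scope.

Lemma piecewise_ind (bs : seq T) (P : T -> T -> Prop) :
  (forall t1 t2, t1 <= t2 -> (forall b, b \in bs -> ~ (t1 < b < t2)) -> P t1 t2) ->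
  (forall t1 t2 t3, t1 <= t2 -> t2 <= t3 -> P t1 t2 -> P t2 t3 -> P t1 t3) ->
  forall t1 t2, t1 <= t2 -> P t1 t2.
Proof.
move=> base comp.
suff H (l : seq T) t1 t2 : t1 <= t2 ->
    (forall b, b \in bs -> b \notin l -> ~ (t1 < b < t2)) -> P t1 t2.
  by move=> t1 t2 le; apply: (H bs) => // b ->.
elim: l t1 t2 => [|b0 l IH] t1 t2 le H.
  by apply: base => // b /H; apply.
have [/andP[lt1 lt2]|out] := boolP (t1 < b0 < t2); last first.
  apply: IH => // b bs_b bl; have [->|nb] := eqVneq b b0; first exact/negP.
  by apply: H; rewrite // in_cons negb_or nb.
apply: (comp t1 b0 t2); [exact: ltW | exact: ltW | apply: IH | apply: IH];
  try exact: ltW; move=> b bs_b bl /andP[c1 c2].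
- have [eb|nb] := eqVneq b b0; first by move: c2; rewrite eb ltxx.
  by apply: (H b) => //; [rewrite in_cons negb_or nb | rewrite c1 (lt_trans c2)].
- have [eb|nb] := eqVneq b b0; first by move: c1; rewrite eb ltxx.
  by apply: (H b) => //; [rewrite in_cons negb_or nb | rewrite c2 (lt_trans lt1)].
Qed.

End PiecewiseInduction.

Lemma finite_rank_ind {I : finType} {disp} {T : porderType disp} (rank : I -> T)
    (P : I -> Prop) :
  (forall k, (forall k', (rank k' < rank k)%O -> P k') -> P k) -> forall k, P k.
Proof.
move=> IH.
suff H N k : #|[set x | (rank x < rank k)%O]| = N -> P k by move=> k; exact: H.
elim/ltn_ind: N k => N IHN k cardk; apply: IH => k' lt'.
apply: (IHN _ _ k' erefl); rewrite -cardk; apply/proper_card/properP; split.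
  by apply/fintype.subsetP => x; rewrite !inE => /lt_trans; apply.
by exists k'; rewrite !inE ?lt' ?ltxx.
Qed.

Local Open Scope ring_scope.

Section LipschitzFirstRoot.
Context {R : realType} {f : R -> R} {L : R}.
Hypotheses (L_gt0 : 0 < L) (f_lip : forall x y, `|f x - f y| <= L * `|x - y|).

Lemma lipschitz_gt0_near c x : L * `|x - c| < f c -> 0 < f x.
Proof. by move=> h; have := f_lip x c; rewrite ler_norml; lra. Qed.

Lemma lipschitz_lt0_near c x : L * `|x - c| < - f c -> f x < 0.
Proof. by move=> h; have := f_lip x c; rewrite ler_norml; lra. Qed.

Local Open Scope classical_set_scope.

Lemma lipschitz_first_root {a b} : a <= b -> 0 < f a -> f b <= 0 ->
  exists c, [/\ a < c, c <= b, f c = 0 & forall t, a <= t < c -> 0 < f t].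
Proof.
move=> ab fa fb.
pose E := [set t | a <= t <= b /\ forall u, a <= u <= t -> 0 < f u].
have Ea : E a.
  split=> [|u /andP[au ua]]; first by rewrite lexx ab.
  by have -> : u = a by apply/eqP; rewrite eq_le ua au.
have supE : has_sup E by split; [exists a | exists b => t [/andP[]]].
set c := sup E.
have ac : a <= c := sup_upper_bound supE Ea.
have below t : a <= t < c -> 0 < f t.
  move=> /andP[a_t tc].
  have [|e [_ Ee] ce] := sup_adherent (eps := c - t) _ supE; first by rewrite subr_gt0.
  by apply: Ee; rewrite a_t; rewrite /c in ce; lra.
have fc_ge0 : 0 <= f c.
  rewrite leNgt; apply/negP => fc_lt0.
  have [|e Ee ce] := sup_adherent (eps := - f c / L) _ supE.
    by rewrite divr_gt0 ?oppr_gt0.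
  have ec : e <= c := sup_upper_bound supE Ee.
  have [/andP[ae _] Epos] := Ee.
  have : f e < 0.
    apply: (lipschitz_lt0_near c); rewrite distrC ger0_norm ?subr_ge0 //.
    by rewrite -ltr_pdivlMl // mulrC; rewrite /c in ce *; lra.
  by have := Epos e; rewrite lexx ae => /(_ isT); lra.
have cb : c <= b by apply: ge_sup; [exists a | move=> t [/andP[]]].
have fc_le0 : f c <= 0.
  rewrite leNgt; apply/negP => fc_gt0.
  have cb' : c < b by rewrite lt_neqAle cb andbT; apply: contraTneq fb => <-; rewrite -ltNge.
  pose dl := Num.min (f c / (2 * L)) (b - c).
  have dl_gt0 : 0 < dl by rewrite lt_min divr_gt0 ?mulr_gt0 ?subr_gt0.
  have dl_le1 : dl <= f c / (2 * L) by rewrite ge_min lexx.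
  have dl_le2 : dl <= b - c by rewrite ge_min lexx orbT.
  have Ldl : L * dl < f c.
    have := ler_wpM2l (ltW L_gt0) dl_le1.
    have -> : L * (f c / (2 * L)) = f c / 2 by field; rewrite gt_eqF.
    lra.
  have Ecd : E (c + dl).
    split=> [|u /andP[au ud]]; first by apply/andP; split; lra.
    have [uc|cu] := ltP u c; first by rewrite below ?au.
    apply: (lipschitz_gt0_near c); apply: le_lt_trans Ldl.
    by rewrite ler_pM2l // ger0_norm ?subr_ge0 // lerBlDl.
  by have := sup_upper_bound supE Ecd; rewrite -/c; lra.
have fc0 : f c = 0 by apply/eqP; rewrite eq_le fc_le0 fc_ge0.
exists c; split=> //; rewrite lt_neqAle ac andbT.
by apply: contraTneq fa => ->; rewrite fc0 ltxx.
Qed.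

End LipschitzFirstRoot.

Section Forest.
Context {I : finType} {par : I -> option I}.

Definition ancestor (a b : I) : Prop := exists k, iter k (obind par) (Some b) = Some a.

Lemma ancestor_refl a : ancestor a a.
Proof. by exists 0%N. Qed.

Lemma ancestor_par {c k} : par c = Some k -> ancestor k c.
Proof. by exists 1%N. Qed.

Lemma ancestor_trans {a b c} : ancestor a b -> ancestor b c -> ancestor a c.
Proof. by move=> [k1 h1] [k2 h2]; exists (k1 + k2)%N; rewrite iterD h2. Qed.

Lemma ancestor_total {a b c} : ancestor a c -> ancestor b c -> ancestor a b \/ ancestor b a.
Proof.
move=> [k1 h1] [k2 h2]; have [le|le] := leqP k1 k2.
  by right; exists (k2 - k1)%N; rewrite -h1 -iterD subnK.
by left; exists (k1 - k2)%N; rewrite -h2 -iterD subnK // ltnW.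
Qed.

Lemma ancestor_child {k b} : ancestor k b -> b <> k ->
  exists2 c, par c = Some k & ancestor c b.
Proof.
move=> [[|j]]; first by move=> [->].
rewrite iterS; case h: (iter j _ _) => [c|] //= pc _.
by exists c => //; exists j.
Qed.

Lemma ancestor_const (U : Type) (g : I -> U) :
  (forall c k, par c = Some k -> g c = g k) -> forall {a b}, ancestor a b -> g b = g a.
Proof.
move=> gpar a b [k]; elim: k a => [|k IH] a; first by move=> [->].
rewrite iterS; case h: (iter k _ _) => [c|] //= pc.
by rewrite (IH c h) (gpar _ _ pc).
Qed.

Context {disp : Order.disp_t} {T : porderType disp} {rank : I -> T}.
Hypothesis par_rank : forall {c k}, par c = Some k -> (rank k < rank c)%O.

Lemma ancestor_rank {a b} : ancestor a b -> (rank a <= rank b)%O.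
Proof.
move=> [k]; elim: k a => [|k IH] a; first by move=> [->].
rewrite iterS; case h: (iter k _ _) => [c|] //= pc.
exact: le_trans (ltW (par_rank pc)) (IH c h).
Qed.

Lemma par_not_ancestor {c k} : par c = Some k -> ~ ancestor c k.
Proof. by move=> pc /ancestor_rank ck; have := lt_le_trans (par_rank pc) ck; rewrite ltxx. Qed.

Lemma sibling_ancestor_uniq {c1 c2 k b} : par c1 = Some k -> par c2 = Some k ->
  ancestor c1 b -> ancestor c2 b -> c1 = c2.
Proof.
move=> p1 p2 a1 a2.
wlog [[|j] h] : c1 c2 p1 p2 a1 a2 / ancestor c1 c2.
  move=> W; have [h|h] := ancestor_total a1 a2; first exact: W h.
  by symmetry; exact: W h.
by case: h.
rewrite iterSr /= p2 in h.
by case: (par_not_ancestor p1); exists j.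
Qed.

Lemma forest_ind (P : I -> Prop) :
  (forall k, (forall c, par c = Some k -> P c) -> P k) -> forall k, P k.
Proof.
move=> IH; apply: (@finite_rank_ind _ _ T^d rank) => k IHk.
by apply: IH => c /par_rank lt; apply: IHk; rewrite ltEdual.
Qed.

Context {V : zmodType}.
Local Open Scope ring_scope.

Definition subtree_sum (f : I -> V) (k : I) : V := \sum_(b | `[< ancestor k b >]) f b.

Lemma subtree_sumE f k :
  subtree_sum f k = f k + \sum_(c | par c == Some k) subtree_sum f c.
Proof.
rewrite /subtree_sum (bigD1 k) /=; last exact/asboolP/ancestor_refl.
congr (_ + _); rewrite (exchange_big_dep (fun b => `[< ancestor k b >] && (b != k))) /=.
  apply: eq_bigr => b /andP[/asboolP kb bk].
  have [c pc cb] := ancestor_child kb (elimN eqP bk).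
  rewrite (bigD1 c) /=; last by rewrite pc eqxx; exact/asboolP.
  rewrite big1 ?addr0 // => c' /andP[/andP[/eqP pc' /asboolP c'b] /eqP[]].
  exact: sibling_ancestor_uniq pc' pc c'b cb.
move=> c b /eqP pc /asboolP cb; apply/andP; split.
  exact/asboolP/(ancestor_trans (ancestor_par pc)).
by apply: contraPneq (par_not_ancestor pc) => <-.
Qed.

Lemma sum_roots f : \sum_b f b = \sum_(c | par c == None) subtree_sum f c.
Proof.
have : \sum_k subtree_sum f k =
       \sum_k f k + \sum_k \sum_(c | par c == Some k) subtree_sum f c.
  by rewrite -big_split; apply: eq_bigr => k _; exact: subtree_sumE.
rewrite [X in _ = _ + X](exchange_big_dep (fun c => par c != None)) /=; last first.
  by move=> k c _ /eqP ->.
have inner c : par c != None -> \sum_(k | par c == Some k) subtree_sum f c = subtree_sum f c.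
  by case: (par c) => [k|] // _; rewrite (big_pred1 k).
rewrite [X in _ = _ + X](eq_bigr _ inner).
by rewrite (bigID (fun c => par c == None)) /= => /addIr.
Qed.

End Forest.

Arguments ancestor {I} par a b.
Arguments subtree_sum {I} par {V} f k.

Section TwoThresholdRun.
Context {R : realType} {m n : nat} {eps : R} {r w d : 'I_n -> R}
  {p : 'I_m -> 'I_n -> option R} {s : run R m n}.
Hypotheses (valid : valid_instance eps w p)
  (two_threshold : is_two_threshold_run eps r w d p s).

Local Notation mach := (Defs.mach s).
Local Notation adm := (Defs.adm s).
Local Notation rem := (Defs.rem s).
Local Notation sched := (Defs.sched s).
Local Notation act := (active eps p s).
Local Notation act_before := (active_before eps p s).
Local Notation rho := (density w p).
Local Notation e' := (eps' eps).
Local Notation cs := (cst eps).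

Lemma eps'_gt0 : 0 < e'.
Proof. by case: valid => eps_gt0 _; rewrite lt_min eps_gt0 ltr01. Qed.

Lemma eps'_le1 : e' <= 1.
Proof. by rewrite ge_min lexx orbT. Qed.

Lemma cst_gt0 : 0 < cs.
Proof. by rewrite /cst; have := eps'_gt0; lra. Qed.

Lemma w_gt0 k : 0 < w k.
Proof. by case: valid => _ []. Qed.

Lemma proc_gt0 {i k q} : p i k = Some q -> 0 < q.
Proof. by case: valid => _ [_]; apply. Qed.

Lemma densityE {i k q} : p i k = Some q -> rho i k = w k / q.
Proof. by rewrite /density => ->. Qed.

Lemma density_gt0 {i k q} : p i k = Some q -> 0 < rho i k.
Proof. by move=> hq; rewrite (densityE hq) divr_gt0 ?w_gt0 ?(proc_gt0 hq). Qed.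

Lemma density_ge0 i k : 0 <= rho i k.
Proof.
by rewrite /density; case hq: (p i k) => [q|] //; exact/ltW/divr_gt0/(proc_gt0 hq)/w_gt0.
Qed.

Lemma density_active_gt0 {i k u} : act i k u -> 0 < rho i k.
Proof. by case=> _ [_ [q [hq _]]]; exact: density_gt0 hq. Qed.

Lemma rem_adm {k i} : mach k = Some i -> exists2 q, p i k = Some q & rem k (adm k) = q.
Proof. by case: two_threshold => _ [H _] hk; case: (H k i hk) => -[q [hq rq]] _; exists q. Qed.

Lemma rem_adm_proc {k i q} : mach k = Some i -> p i k = Some q -> rem k (adm k) = q.
Proof. by move=> /rem_adm[q' ->] rq [<-]. Qed.

Lemma rem_processed {k i t1 t2} : mach k = Some i -> t1 <= t2 ->
  (forall u, t1 <= u < t2 -> sched i u = Some k) -> rem k t2 = rem k t1 - (t2 - t1).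
Proof. by case: two_threshold => _ [H _] hk le; case: (H k i hk) => _ /(_ t1 t2 le) []. Qed.

Lemma rem_idle {k i t1 t2} : mach k = Some i -> t1 <= t2 ->
  (forall u, t1 <= u < t2 -> sched i u <> Some k) -> rem k t2 = rem k t1.
Proof. by case: two_threshold => _ [H _] hk le; case: (H k i hk) => _ /(_ t1 t2 le) []. Qed.

Lemma sched_active {i u k} : sched i u = Some k ->
  act i k u /\ forall k', act i k' u -> rho i k' <= rho i k.
Proof.
by case: two_threshold => _ [_ [/(_ i u) + _]]; case: (sched i u) => // k0 h [<-].
Qed.

Lemma sched_idle {i u} : sched i u = None -> forall k, ~ act i k u.
Proof. by case: two_threshold => _ [_ [/(_ i u) + _]]; case: (sched i u). Qed.

Lemma sched_piecewise_ind i (P : R -> R -> Prop) :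
  (forall t1 t2, t1 < t2 ->
     (forall u, t1 <= u < t2 -> sched i u = sched i t1) -> P t1 t2) ->
  (forall t, P t t) ->
  (forall t1 t2 t3, t1 <= t2 -> t2 <= t3 -> P t1 t2 -> P t2 t3 -> P t1 t3) ->
  forall t1 t2, t1 <= t2 -> P t1 t2.
Proof.
move=> base refl comp; case: two_threshold => [[bs Hbs] _].
apply: (piecewise_ind bs) => // t1 t2 le12 nb.
have [<-|ne12] := eqVneq t1 t2; first exact: refl.
apply: base => [|u /andP[t1u ut2]]; first by rewrite lt_neqAle ne12.
symmetry; apply: Hbs t1u _ => b bs_b /andP[t1b bu].
by apply: (nb b bs_b); rewrite t1b (le_lt_trans bu).
Qed.

Section RemainingRequirement.
Context {k : 'I_n} {i : 'I_m} (hk : mach k = Some i).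

Lemma rem_mono {t1 t2} : t1 <= t2 ->
  rem k t2 <= rem k t1 /\ rem k t1 <= rem k t2 + (t2 - t1).
Proof.
move: t1 t2; apply: (sched_piecewise_ind i) => [t1 t2 lt12 const|t|t1 t2 t3 _ _]; last lra.
  case: (eqVneq (sched i t1) (Some k)) => [on|off].
    by rewrite (rem_processed hk (ltW lt12)) => [|u /const]; [lra | rewrite on].
  by rewrite (rem_idle hk (ltW lt12)) => [|u /const ->]; [lra | exact/eqP].
lra.
Qed.

Lemma rem_lipschitz x y : `|rem k x - rem k y| <= 1 * `|x - y|.
Proof.
rewrite mul1r; wlog le : x y / x <= y.
  by move=> W; have [/W //|/ltW/W] := leP x y; rewrite distrC (distrC x).
have [h1 h2] := rem_mono le.
by rewrite ger0_norm ?subr_ge0 // distrC ger0_norm ?subr_ge0 //; lra.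
Qed.

Lemma rem_ge0 {t} : adm k <= t -> 0 <= rem k t.
Proof.
have [q hq rq] := rem_adm hk.
have rem_adm_ge0 : 0 <= rem k (adm k) by rewrite rq ltW ?(proc_gt0 hq).
move=> kt; apply: (sched_piecewise_ind i (fun t1 t2 => 0 <= rem k t1 -> 0 <= rem k t2)
  _ _ _ _ _ kt rem_adm_ge0) => [t1 t2 lt12 const r1|//|t1 t2 t3 _ _ h12 h23 /h12/h23 //].
case: (eqVneq (sched i t1) (Some k)) => [on|off]; last first.
  by rewrite (rem_idle hk (ltW lt12)) // => u /const ->; exact/eqP.
have on_u u : t1 <= u < t2 -> sched i u = Some k by move=> /const ->.
rewrite (rem_processed hk (ltW lt12)) // subr_ge0 leNgt; apply/negP => short.
pose u0 := t1 + rem k t1.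
have u0_in : t1 <= u0 < t2 by rewrite lerDl r1 -ltrBrDl.
have /andP[t1u0 u0t2] := u0_in.
have : rem k u0 = 0.
  rewrite (rem_processed hk t1u0) => [|u /andP[t1u uu0]]; first by rewrite /u0; lra.
  by apply: on_u; rewrite t1u (lt_trans uu0).
by have [[_ [_ [_ [_ [pos _]]]]] _] := sched_active (on_u _ u0_in); lra.
Qed.

Lemma rem_before_adm {t1 t2} : t1 <= t2 -> t2 <= adm k -> rem k t2 = rem k t1.
Proof.
move=> le12 le2; apply: (rem_idle hk le12) => u /andP[_ ut2] /sched_active[[_ [ku _]] _].
by have := lt_le_trans (le_lt_trans ku ut2) le2; rewrite ltxx.
Qed.

Lemma rem_le_proc {q} t : p i k = Some q -> rem k t <= q.
Proof.
move=> /(rem_adm_proc hk) rq.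
have [tk|kt] := leP t (adm k); first by rewrite -(rem_before_adm tk (lexx _)) rq.
by rewrite -rq; case: (rem_mono (ltW kt)).
Qed.

End RemainingRequirement.

Lemma active_le {i j u u'} : act i j u -> adm j <= u' -> u' <= u -> act i j u'.
Proof.
case=> hj [_ [q [hq [pos H]]]] ju' u'u; do 2!split=> //; exists q; split=> //; split.
  by apply: lt_le_trans pos _; case: (rem_mono hj u'u).
by move=> t /andP[jt tu']; apply: H; rewrite jt (le_trans tu').
Qed.

Lemma busy_rem_sum {i} {X : pred 'I_n} {t1 t2} : (forall k, X k -> mach k = Some i) ->
  t1 <= t2 -> (forall u, t1 <= u < t2 -> exists2 k, X k & sched i u = Some k) ->
  \sum_(k | X k) (rem k t1 - rem k t2) = t2 - t1.
Proof.
move=> HX; move: t1 t2; apply: (sched_piecewise_ind i (fun t1 t2 =>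
  (forall u, t1 <= u < t2 -> exists2 k, X k & sched i u = Some k) ->
  \sum_(k | X k) (rem k t1 - rem k t2) = t2 - t1)).
- move=> t1 t2 lt12 const busy.
  have [|k0 Xk0 on] := busy t1; first by rewrite lexx lt12.
  rewrite (bigD1 k0) //= big1 ?addr0 => [|k /andP[Xk nk]].
    by rewrite (rem_processed (HX _ Xk0) (ltW lt12)) => [|u /const ->]; first lra.
  rewrite (rem_idle (HX _ Xk) (ltW lt12)) ?subrr // => u /const ->; rewrite on => -[ek].
  by rewrite ek eqxx in nk.
- by move=> t _; rewrite subrr big1 // => k _; rewrite subrr.
- move=> t1 t2 t3 le12 le23 h12 h23 busy.
  have -> : \sum_(k | X k) (rem k t1 - rem k t3) =
      \sum_(k | X k) (rem k t1 - rem k t2) + \sum_(k | X k) (rem k t2 - rem k t3).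
    by rewrite -big_split; apply: eq_bigr => k _ /=; lra.
  rewrite h12 ?h23; first lra.
  + by move=> u /andP[t2u ut3]; apply: busy; rewrite ut3 (le_trans le12).
  + by move=> u /andP[t1u ut2]; apply: busy; rewrite t1u (lt_le_trans ut2).
Qed.

Definition admitted_over (k j : 'I_n) : Prop :=
  exists i, [/\ mach k = Some i, act_before i j (adm k),
    forall j', act_before i j' (adm k) -> rho i j' <= rho i j
    & thresholds eps w p i k j].

(* The charging forest: [k] hangs below the densest job active when it was
   admitted, against which its admission thresholds were checked. *)
Definition parent (k : 'I_n) : option 'I_n :=
  if pselect (exists j, admitted_over k j) is left h then Some (projT1 (cid h)) else None.

Lemma parentP {k j} : parent k = Some j -> admitted_over k j.
Proof. by rewrite /parent; case: pselect => // h [<-]; exact: projT2 (cid h). Qed.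

Lemma parent_exists {k i j} : mach k = Some i -> act_before i j (adm k) ->
  exists2 j', parent k = Some j' & [/\ act_before i j' (adm k),
    forall j'', act_before i j'' (adm k) -> rho i j'' <= rho i j'
    & thresholds eps w p i k j'].
Proof.
move=> hk hj; case: two_threshold => _ [_ [_ [admission routine]]].
have [ev ck] := routine k i hk.
have [_ /(_ _ ck) [_ [_ [_ /(_ (ex_intro _ j hj))]]]] := admission _ ev i.
move=> [j' [hj' [max thr]]].
rewrite /parent; case: pselect => [h|]; last by case; exists j', i; split=> //; exact/thr.
exists (projT1 (cid h)) => //; have [i' [hk' ? ? ?]] := projT2 (cid h).
have ei : i' = i by move: hk'; rewrite hk => -[].
by rewrite -ei.
Qed.

Lemma adm_inj {k k' i} : mach k = Some i -> mach k' = Some i -> adm k = adm k' -> k = k'.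
Proof.
case: two_threshold => _ [_ [_ [_ routine]]] hk hk' e.
by have [_] := routine k i hk; rewrite e; have [_ ->] := routine k' i hk' => -[].
Qed.

Lemma thresholds_density {i c k} : thresholds eps w p i c k -> 4 * rho i k <= rho i c.
Proof.
case=> qc [q [hqc [hq H]]]; have rk_ge0 := density_ge0 i k.
case: H => [[_ h]|[/andP[_ qcq] wck]|[_ h]] //.
- apply: le_trans h; apply: ler_wpM2r => //.
  by rewrite ler_pdivlMr ?eps'_gt0 //; have := eps'_le1; lra.
- rewrite (densityE hq) (densityE hqc) mulrA ler_pdivrMr ?(proc_gt0 hq) //.
  apply: le_trans wck _; rewrite -{1}[w c](divfK (lt0r_neq0 (proc_gt0 hqc))).
  by rewrite ler_wpM2l // ltW // divr_gt0 ?w_gt0 ?(proc_gt0 hqc).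
Qed.

Lemma thresholds_cases {i c k} : thresholds eps w p i c k ->
  8 / e' * rho i k <= rho i c \/ 4 * w k <= w c.
Proof.
case=> qc [q [hqc [hq [[_ h]|[_ h]|[qqc h]]]]]; [by left | by right | right].
move: h; rewrite (densityE hq) (densityE hqc) mulrA ler_pdivrMr ?(proc_gt0 hq) //.
move/le_trans; apply; rewrite -[X in _ <= X](divfK (lt0r_neq0 (proc_gt0 hqc))).
by apply: ler_wpM2l; [exact: divr_ge0 (ltW (w_gt0 c)) (ltW (proc_gt0 hqc)) | exact: ltW].
Qed.

Lemma density_over_active {k i j} : mach k = Some i -> act_before i j (adm k) ->
  4 * rho i j <= rho i k.
Proof.
move=> hk hj; have [j' _ [_ max thr]] := parent_exists hk hj.
by apply: le_trans (thresholds_density thr); rewrite ler_pM2l // max.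
Qed.

Lemma parent_spec {c k} : parent c = Some k -> exists i,
  [/\ mach c = Some i, mach k = Some i, adm k < adm c & thresholds eps w p i c k].
Proof. by move=> /parentP[i [hc [[hk _] lt] _ thr]]; exists i. Qed.

Lemma child_mach {c k i} : mach k = Some i -> parent c = Some k -> mach c = Some i.
Proof. by move=> hk /parent_spec[i' [-> hk' _ _]]; rewrite -hk' hk. Qed.

Lemma child_thresholds {c k i} : mach k = Some i -> parent c = Some k ->
  thresholds eps w p i c k.
Proof. by move=> hk /parent_spec[i' [_ hk' _]]; move: hk'; rewrite hk => -[<-]. Qed.

Lemma parent_adm c k : parent c = Some k -> adm k < adm c.
Proof. by case/parent_spec=> i []. Qed.

Lemma ancestor_mach {a b} : ancestor parent a b -> mach b = mach a.
Proof.
apply: ancestor_const => c k /parent_spec[i [hc hk _ _]].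
by rewrite hc hk.
Qed.

(* A job admitted after a denser active job would have violated the thresholds. *)
Lemma adm_le_of_density {i j x u} : act i j u -> act i x u -> rho i j <= rho i x ->
  adm j <= adm x.
Proof.
move=> aj ax jx; rewrite leNgt; apply/negP => xj.
have x_at_j := active_le ax (ltW xj) aj.2.1.
have := density_over_active aj.1 (conj x_at_j xj).
by have := density_active_gt0 ax; lra.
Qed.

Lemma ancestor_of_active {k i j} : mach k = Some i -> adm j <= adm k ->
  act i j (adm k) -> ancestor parent j k.
Proof.
move: k; apply: (finite_rank_ind adm) => k IH hk jk ajk.
have [<-|njk] := eqVneq j k; first exact: ancestor_refl.
have ltjk : adm j < adm k.
  by rewrite lt_neqAle jk andbT; apply: contra_neq njk; exact: adm_inj ajk.1 hk.
have [pp ppk [app max _]] := parent_exists hk (conj ajk ltjk).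
have jpp := adm_le_of_density ajk app.1 (max j (conj ajk ltjk)).
apply: ancestor_trans (ancestor_par ppk).
exact: (IH _ app.2 app.1.1 jpp (active_le ajk jpp (ltW app.2))).
Qed.

Lemma ancestor_sched {i j u k} : act i j u -> sched i u = Some k -> ancestor parent j k.
Proof.
move=> aj /sched_active[ak kmax]; have jk := adm_le_of_density aj ak (kmax j aj).
exact: ancestor_of_active ak.1 jk (active_le aj jk ak.2.1).
Qed.

Lemma unfinished_rem_gt0 {j i t} : mach j = Some i -> ~ finished s j -> adm j <= t ->
  0 < rem j t.
Proof.
move=> hj unfin jt; rewrite ltNge; apply/negP => rt.
have [q hq rq] := rem_adm hj.
have [|c [jc ct rc jc_pos]] := lipschitz_first_root ltr01 (rem_lipschitz hj) jt _ rt.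
  by rewrite rq (proc_gt0 hq).
by apply: unfin; exists c; rewrite /completes /admitted hj ltW.
Qed.

(* [j] stays active until its remaining requirement meets the line
   [adm j + cs * q - t], which happens before [rem j] can reach [0]. *)
Lemma unfinished_window {j i q} : mach j = Some i -> p i j = Some q -> ~ finished s j ->
  exists tau, [/\ adm j <= tau <= adm j + cs * q,
    forall u, adm j <= u < tau -> act i j u & rem j tau = adm j + cs * q - tau].
Proof.
move=> hj hq unfin; have rq := rem_adm_proc hj hq.
set a := adm j in rq *; set b := a + cs * q.
pose slack t := b - t - rem j t.
have slack_lip x y : `|slack x - slack y| <= 2 * `|x - y|.
  have := rem_lipschitz hj y x; rewrite mul1r /slack => lip.
  have -> : b - x - rem j x - (b - y - rem j y) = (y - x) + (rem j y - rem j x) by lra.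
  by apply: le_trans (ler_normD _ _) _; rewrite (distrC y) in lip *; lra.
have cs_q : b = a + q + e' / 2 * q by rewrite /b /cst mulrDl mul1r addrA.
have two_gt0 : (0 : R) < 2 by [].
have e'q := mulr_gt0 (divr_gt0 eps'_gt0 two_gt0) (proc_gt0 hq).
have ab : a <= b by rewrite cs_q; have := proc_gt0 hq; lra.
have [||tau [atau taub st st_pos]] := lipschitz_first_root two_gt0 slack_lip ab.
- by rewrite /slack rq cs_q; lra.
- by rewrite /slack; have := rem_ge0 hj ab; lra.
exists tau; split; [by rewrite ltW | move=> u /andP[au ut] |]; last first.
  by move: st; rewrite /slack; lra.
do 2!split=> //; exists q; split=> //; split; first exact: unfinished_rem_gt0 hj unfin au.
move=> t /andP[at' tu]; have := st_pos t; rewrite at' (le_lt_trans tu ut) /slack.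
by rewrite -/a -/b => /(_ isT); lra.
Qed.

(* [0] for jobs that are never admitted. *)
Definition proc (k : 'I_n) : R := if mach k is Some i then odflt 0 (p i k) else 0.

Lemma procE {k i q} : mach k = Some i -> p i k = Some q -> proc k = q.
Proof. by rewrite /proc => -> ->. Qed.

(* Later than every window [[adm k, adm k + cs * proc k]], so [processed k] is
   all the work [k] ever receives. *)
Definition horizon : R := \sum_k (`|adm k| + cs * `|proc k|).

Lemma horizon_ge k : adm k + cs * proc k <= horizon.
Proof.
rewrite /horizon (bigD1 k) //=; have := ler_norm (adm k).
have : cs * proc k <= cs * `|proc k| by rewrite ler_pM2l ?cst_gt0 // ler_norm.
have : 0 <= \sum_(k' | k' != k) (`|adm k'| + cs * `|proc k'|).
  by apply: sumr_ge0 => k' _; rewrite addr_ge0 // mulr_ge0 // ltW ?cst_gt0.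
lra.
Qed.

Definition processed (k : 'I_n) : R := proc k - rem k horizon.

Lemma processed_bounds {k i q} : mach k = Some i -> p i k = Some q ->
  0 <= processed k /\ processed k <= q.
Proof.
move=> hk hq; rewrite /processed (procE hk hq).
have kh : adm k <= horizon.
  have := horizon_ge k; rewrite (procE hk hq).
  by have := mulr_gt0 cst_gt0 (proc_gt0 hq); lra.
by have := rem_le_proc hk horizon hq; have := rem_ge0 hk kh; lra.
Qed.

Local Notation Y := (subtree_sum parent processed).

Lemma subtree_processed_ge0 {k i} : mach k = Some i -> 0 <= Y k.
Proof.
move=> hk; apply: sumr_ge0 => b /asboolP /ancestor_mach; rewrite hk => hb.
by have [q hq _] := rem_adm hb; case: (processed_bounds hb hq).
Qed.

(* While [j] is active its machine only runs jobs of the subtree of [j]; [j]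
   itself gets at most [q - rem j tau], so its descendants get [e' / 2 * q]. *)
Lemma unfinished_children_work {j i q} : mach j = Some i -> p i j = Some q ->
  ~ finished s j -> e' / 2 * q <= \sum_(c | parent c == Some j) Y c.
Proof.
move=> hj hq unfin; have [tau [/andP[jtau taub] actj rtau]] := unfinished_window hj hq unfin.
pose done_by k := rem k (adm j) - rem k tau.
have busy : subtree_sum parent done_by j = tau - adm j.
  apply: (busy_rem_sum (i := i) (X := fun k => `[< ancestor parent j k >]) _ jtau).
    by move=> k /asboolP /ancestor_mach ->.
  move=> u /actj aju.
  case e: (sched i u) => [k|]; last by case: (sched_idle e j aju).
  by exists k => //; apply/asboolP; exact: ancestor_sched aju e.
move: busy; rewrite (subtree_sumE parent_adm) /done_by (rem_adm_proc hj hq) rtau.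
have -> : cs * q = q + e' / 2 * q by rewrite /cst mulrDl mul1r.
move=> busy.
have <- : \sum_(c | parent c == Some j) subtree_sum parent done_by c = e' / 2 * q by lra.
apply: ler_sum => c /eqP pc; apply: ler_sum => k /asboolP ck.
have hk : mach k = Some i by rewrite (ancestor_mach ck) (ancestor_mach (ancestor_par pc)).
have [qk hqk _] := rem_adm hk; rewrite /done_by /processed (procE hk hqk).
have tau_h : tau <= horizon.
  by apply: le_trans taub _; have := horizon_ge j; rewrite (procE hj hq).
by have := rem_le_proc hk (adm j) hqk; have [] := rem_mono hk tau_h; lra.
Qed.

Lemma finished_admitted k : finished s k -> admitted s k.
Proof. by case=> t []. Qed.

Definition gain (k : 'I_n) : R :=
  if `[< finished s k >] then w k else if admitted s k then - w k else 0.

Local Notation X := (subtree_sum parent gain).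

Section ChargingStep.
Context {k : 'I_n} {i : 'I_m} {q : R}.
Hypotheses (hk : mach k = Some i) (hq : p i k = Some q).
Hypothesis children_charged :
  forall {c}, parent c = Some k -> w c <= X c /\ rho i c * Y c <= X c.

Local Notation SX := (\sum_(c | parent c == Some k) X c).
Local Notation SY := (\sum_(c | parent c == Some k) Y c).

Lemma child_processed_ge0 {c} : parent c = Some k -> 0 <= Y c.
Proof. by move=> pc; exact: subtree_processed_ge0 (child_mach hk pc). Qed.

Lemma child_dominated {c} : parent c = Some k -> 4 * (rho i k * Y c) <= X c.
Proof.
move=> pc; rewrite mulrA; apply: le_trans _ (children_charged pc).2.
by rewrite ler_wpM2r ?(child_processed_ge0 pc) ?(thresholds_density (child_thresholds hk pc)).
Qed.

Lemma children_dominated (P : pred 'I_n) : (forall c, P c -> parent c = Some k) ->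
  rho i k * \sum_(c | P c) Y c <= \sum_(c | P c) X c.
Proof.
move=> hP; rewrite mulr_sumr; apply: ler_sum => c /hP pc.
have := child_dominated pc.
by have := mulr_ge0 (density_ge0 i k) (child_processed_ge0 pc); lra.
Qed.

Lemma heavy_child_charge {c0} : parent c0 = Some k -> 4 * w k <= w c0 ->
  2 * w k + rho i k * SY <= SX.
Proof.
move=> pc0 heavy; rewrite (bigD1 c0) ?pc0 //= [leRHS](bigD1 c0) ?pc0 //= mulrDr.
have : rho i k * \sum_(c | (parent c == Some k) && (c != c0)) Y c <=
       \sum_(c | (parent c == Some k) && (c != c0)) X c.
  by apply: children_dominated => c /andP[/eqP].
have := child_dominated pc0; have [wX _] := children_charged pc0.
by have := mulr_ge0 (density_ge0 i k) (child_processed_ge0 pc0); lra.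
Qed.

Lemma dense_children_charge :
  (forall c, parent c = Some k -> 8 / e' * rho i k <= rho i c) -> e' / 2 * q <= SY ->
  2 * w k + rho i k * SY <= SX.
Proof.
move=> dense work.
have domK : 8 / e' * (rho i k * SY) <= SX.
  rewrite mulrA mulr_sumr; apply: ler_sum => c /eqP pc.
  apply: le_trans _ (children_charged pc).2.
  by rewrite ler_wpM2r ?(child_processed_ge0 pc) ?dense.
have lower : e' * w k / 2 <= rho i k * SY.
  rewrite -[w k](divfK (lt0r_neq0 (proc_gt0 hq))) -(densityE hq).
  have -> : e' * (rho i k * q) / 2 = rho i k * (e' / 2 * q) by ring.
  by rewrite ler_wpM2l ?density_ge0.
apply: le_trans _ domK; rewrite mulrAC ler_pdivlMr ?eps'_gt0 //.
move: lower; set x := rho i k * SY => lower.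
have e'w_gt0 := mulr_gt0 eps'_gt0 (w_gt0 k).
have x_ge0 : 0 <= x by lra.
have : 0 <= 4 - e' by have := eps'_le1; lra.
by move=> /mulr_ge0 /(_ x_ge0); lra.
Qed.

Lemma unfinished_charge : ~ finished s k -> 2 * w k + rho i k * SY <= SX.
Proof.
move=> unfin.
have [[c0 pc0 heavy]|light] := pselect (exists2 c, parent c = Some k & 4 * w k <= w c).
  exact: heavy_child_charge pc0 heavy.
apply: dense_children_charge (unfinished_children_work hk hq unfin) => c pc.
by case: (thresholds_cases (child_thresholds hk pc)) => // heavy; case: light; exists c.
Qed.

Lemma charge_step : w k <= X k /\ rho i k * Y k <= X k.
Proof.
rewrite !(subtree_sumE parent_adm) mulrDr /gain.
have [P_ge0 P_le] := processed_bounds hk hq.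
have : rho i k * processed k <= w k.
  by rewrite -[w k](divfK (lt0r_neq0 (proc_gt0 hq))) -(densityE hq) ler_wpM2l ?density_ge0.
have : rho i k * SY <= SX by apply: children_dominated => c /eqP.
have : 0 <= SY by apply: sumr_ge0 => c /eqP /child_processed_ge0.
move=> /(mulr_ge0 (density_ge0 i k)).
have := w_gt0 k; case: asboolP => [_|unfin]; first lra.
by rewrite /admitted hk /=; have := unfinished_charge unfin; lra.
Qed.

End ChargingStep.

Lemma charged {k i} : mach k = Some i -> w k <= X k /\ rho i k * Y k <= X k.
Proof.
move: k i; apply: (forest_ind parent_adm) => k IH i hk.
have [q hq _] := rem_adm hk.
by apply: (charge_step hk hq) => c pc; apply: IH (child_mach hk pc).
Qed.

Lemma subtree_gain_ge0 k : 0 <= X k.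
Proof.
case hk: (mach k) => [i|]; first by have [+ _] := charged hk; apply: le_trans; exact/ltW/w_gt0.
apply: sumr_ge0 => b /asboolP /ancestor_mach; rewrite hk /gain => hb.
by case: asboolP => [/finished_admitted|_]; rewrite /admitted hb.
Qed.

Lemma gain_sum_ge0 : 0 <= \sum_k gain k.
Proof. by rewrite (sum_roots parent_adm); apply: sumr_ge0 => c _; exact: subtree_gain_ge0. Qed.

Lemma gain_sumE : \sum_k gain k =
    2 * (\sum_(j | `[< finished s j >]) w j) - \sum_(j | admitted s j) w j.
Proof.
rewrite [X in 2 * X]big_mkcond [X in _ - X]big_mkcond /= mulr_sumr -sumrB.
apply: eq_bigr => k _; rewrite /gain; case: asboolP => [/finished_admitted -> | _].
  by rewrite mulr2n; lra.
by case: (admitted s k); rewrite /= ?subr0 ?mulr0 ?sub0r.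
Qed.

End TwoThresholdRun.

Theorem theorem3 (R : realType) (m n : nat) (eps : R)
    (r w d : 'I_n -> R) (p : 'I_m -> 'I_n -> option R) (s : run R m n) :
  valid_instance eps w p ->
  slack_assumption eps r d p ->
  is_two_threshold_run eps r w d p s ->
  1 / 2 * (\sum_(j < n | admitted s j) w j) <=
    \sum_(j < n | `[< finished s j >]) w j.
Proof.
move=> valid _ run.
have := gain_sum_ge0 valid run; rewrite gain_sumE; lra.
Qed.
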